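(* Let $0<\rho<1$ and $r>0$, let $a=\rho r/(1-\rho^2)$, and let $\phi(x)=1-e^{-a\|x\|}$ for $x\in\mathbb{R}^2$. Then for every $x\in\mathbb{R}^2$ with $\|x\|=r$, $$T_\rho\phi(x)\ge1-e^{-\frac{\rho^2r^2}{2(1-\rho^2)}}\int_0^\infty\gamma_1(t)\,dt-e^{\frac32\frac{\rho^2r^2}{1-\rho^2}}\int_{-\infty}^{-\frac{2\rho r}{\sqrt{1-\rho^2}}}\gamma_1(t)\,dt.$$
   Context: $\gamma_m$ is the standard Gaussian density on $\mathbb{R}^m$; $T_\rho u(x)=\int_{\mathbb{R}^2}u(\rho x+y\sqrt{1-\rho^2})\gamma_2(y)\,dy$. *)

From HB Require Import structures.
From mathcomp Require Import all_boot all_order all_algebra.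
From mathcomp Require Import all_classical all_reals all_analysis.
Set Implicit Arguments. Unset Strict Implicit. Unset Printing Implicit Defensive.
Import Order.TTheory GRing.Theory Num.Theory.
Local Open Scope classical_set_scope.
Local Open Scope ring_scope.

Definition gamma1 {R : realType} (t : R) : R :=
  expR (- (t ^+ 2) / 2) / Num.sqrt (2 * pi).

Definition gamma2 {R : realType} (y : R * R) : R :=
  expR (- (y.1 ^+ 2 + y.2 ^+ 2) / 2) / (2 * pi).

Definition norm2 {R : realType} (x : R * R) : R :=
  Num.sqrt (x.1 ^+ 2 + x.2 ^+ 2).

Definition leb2 {R : realType} :=
  ((@lebesgue_measure R) \x (@lebesgue_measure R))%E.

Definition Trho {R : realType} (rho : R) (u : R * R -> R) (x : R * R) : \bar R :=
  (\int[leb2]_(y in [set: R * R])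
     (u (rho * x.1 + y.1 * Num.sqrt (1 - rho ^+ 2),
         rho * x.2 + y.2 * Num.sqrt (1 - rho ^+ 2)) * gamma2 y)%:E)%E.

(* Write x = r u with u a unit vector and s = sqrt(1 - rho^2). By Cauchy-Schwarz,
   |rho x + s y| >= |<u, rho x + s y>| = |rho r + s <u, y>|, so the integrand of
   T_rho phi (x) dominates (1 - exp(-a |rho r + s <u, y>|)) gamma_2(y).  The
   Gaussian gamma_2 is rotation invariant (a rotation is a product of three shears,
   each a translation in one variable), so <u, y> may be replaced by the first
   coordinate and T_rho phi (x) >= 1 - \int exp(-a |rho r + s t|) gamma_1(t) dt.
   Since rho r = a s^2, splitting the last integral at the kink t = - a s and
   completing the square (exponential tilting of gamma_1) turns the two halves into
   exactly the two Gaussian integrals of the statement. *)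

From HB Require Import structures.
From mathcomp Require Import all_boot all_order all_algebra.
From mathcomp Require Import all_classical all_reals all_analysis.
From mathcomp Require Import ring measurable_realfun.
Import Order.TTheory GRing.Theory Num.Theory.
Import numFieldNormedType.Exports.
Local Open Scope classical_set_scope.
Local Open Scope ring_scope.

Section gaussian.
Context {R : realType}.
Notation mu := (@lebesgue_measure R).

Lemma gamma1_normal_pdf : @gamma1 R = normal_pdf 0 1.
Proof.
apply/funext => t; rewrite /gamma1 normal_pdfE ?oner_neq0 //.
rewrite /normal_peak /normal_fun subr0 expr1n mul1r [RHS]mulrC.
by congr (expR _ / Num.sqrt _); rewrite mulr_natl.
Qed.

Lemma gamma1_ge0 (t : R) : 0 <= gamma1 t.
Proof. by rewrite gamma1_normal_pdf normal_pdf_ge0. Qed.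

Lemma continuous_gamma1 : continuous (@gamma1 R).
Proof. by rewrite gamma1_normal_pdf; exact/continuous_normal_pdf/oner_neq0. Qed.

Lemma integral_gamma1 : (\int[mu]_x (gamma1 x)%:E = 1)%E.
Proof. by rewrite gamma1_normal_pdf integral_normal_pdf. Qed.

Lemma measurable_gamma1 : measurable_fun [set: R] (@gamma1 R).
Proof. by rewrite gamma1_normal_pdf; exact: measurable_normal_pdf. Qed.

Lemma fin_num_integral_gamma1 (D : set R) : measurable D ->
  (\int[mu]_(x in D) (gamma1 x)%:E)%E \is a fin_num.
Proof.
move=> mD; rewrite ge0_fin_numE; last first.
  by apply: integral_ge0 => t _; rewrite lee_fin gamma1_ge0.
apply: (@le_lt_trans _ _ 1%E); last exact: ltry.
rewrite -integral_gamma1; apply: ge0_subset_integral => //.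
  by apply/measurable_EFinP; exact: measurable_gamma1.
by move=> t _; rewrite lee_fin gamma1_ge0.
Qed.

Lemma gamma2_factor (y : R * R) s t : s ^+ 2 + t ^+ 2 = y.1 ^+ 2 + y.2 ^+ 2 ->
  gamma2 y = gamma1 s * gamma1 t.
Proof.
move=> e; rewrite /gamma2 /gamma1 -e mulf_div -expRD.
congr (_ / _); first by congr expR; rewrite !mulNr -opprD mulrDl.
by rewrite -expr2 sqr_sqrtr // mulr_ge0 // pi_ge0.
Qed.

Lemma expR_mul_gamma1 (m x : R) :
  expR (m * x) * gamma1 x = expR (m ^+ 2 / 2) * gamma1 (x - m).
Proof. by rewrite /gamma1 !mulrA -!expRD; congr (expR _ / _); field. Qed.

Lemma integral_one_sub_mul_gamma1 (g : R -> R) : measurable_fun [set: R] g ->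
  (forall t, 0 <= g t <= 1) ->
  (\int[mu]_t ((1 - g t) * gamma1 t)%:E = 1 - \int[mu]_t (g t * gamma1 t)%:E)%E.
Proof.
move=> mg g01.
have m1g : measurable_fun [set: R] (fun t => ((1 - g t) * gamma1 t)%:E).
  apply/measurable_EFinP; apply: measurable_funM; last exact: measurable_gamma1.
  exact: measurable_funB.
have mg' : measurable_fun [set: R] (fun t => (g t * gamma1 t)%:E).
  by apply/measurable_EFinP; apply: measurable_funM => //; exact: measurable_gamma1.
have g_ge0 t : 0 <= g t by case/andP: (g01 t).
have g_le1 t : g t <= 1 by case/andP: (g01 t).
have sum1 : (\int[mu]_t ((1 - g t) * gamma1 t)%:E
    + \int[mu]_t (g t * gamma1 t)%:E = 1)%E.
  rewrite -ge0_integralD //; last 2 first.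
  - by move=> t _; rewrite lee_fin mulr_ge0 ?subr_ge0 ?gamma1_ge0.
  - by move=> t _; rewrite lee_fin mulr_ge0 ?gamma1_ge0.
  rewrite -integral_gamma1; apply: eq_integral => t _; rewrite -EFinD; congr EFin.
  by ring.
have fin : (\int[mu]_t (g t * gamma1 t)%:E)%E \is a fin_num.
  rewrite ge0_fin_numE; last by apply: integral_ge0 => t _; rewrite lee_fin mulr_ge0 ?gamma1_ge0.
  apply: (@le_lt_trans _ _ 1%E); last exact: ltry.
  rewrite -integral_gamma1; apply: ge0_le_integral => //.
  - by move=> t _; rewrite lee_fin mulr_ge0 ?gamma1_ge0.
  - by apply/measurable_EFinP; exact: measurable_gamma1.
  - by move=> t _; rewrite lee_fin ler_piMl ?gamma1_ge0.
by rewrite -sum1 addeK.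
Qed.

End gaussian.

Section translation.
Context {R : realType}.
Notation mu := (@lebesgue_measure R).
Variable G : R -> R.
Hypotheses (cG : continuous G) (G0 : forall x, 0 <= G x).

Let derive1_addr (c : R) : (fun x : R => x + c)^`()%classic = cst 1.
Proof.
by apply/funext => x; rewrite derive1E deriveD// derive_id derive_cst addr0.
Qed.

Let continuous_addr (c : R) : continuous (fun x : R => x + c).
Proof. by move=> x; apply: cvgD; [exact: cvg_id|exact: cvg_cst]. Qed.

Lemma integral_translate (c : R) :
  (\int[mu]_x (G (x + c))%:E = \int[mu]_x (G x)%:E)%E.
Proof.
rewrite (@increasing_ge0_integration_by_substitutionT _ (fun x => x + c) G)//.
- by apply: eq_integral => x _; rewrite derive1_addr /= mulr1.
- by move=> x y xy; rewrite ltrD2r.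
- by rewrite derive1_addr; exact: cst_continuous.
- by rewrite derive1_addr; exact: is_cvg_cst.
- by rewrite derive1_addr; exact: is_cvg_cst.
- exact: (@cvg_addrr_Ny R c).
- exact: (@cvg_addrr R c).
Qed.

Lemma integral_translate_itvy (a c : R) :
  (\int[mu]_(x in `[a, +oo[) (G (x + c))%:E =
   \int[mu]_(x in `[(a + c)%R, +oo[) (G x)%:E)%E.
Proof.
transitivity (\int[mu]_(x in `[a, +oo[)
    (((G \o (fun x => x + c)) * (fun x => x + c)^`()%classic) x)%:E)%E.
  by apply: eq_integral => x _; rewrite derive1_addr /= mulr1.
apply/esym; apply: (@increasing_ge0_integration_by_substitutiony R (fun x => x + c) G a).
- by move=> x y _ _ xy; rewrite ltrD2r.
- by rewrite derive1_addr => x _; exact: cst_continuous.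
- by rewrite derive1_addr; exact: is_cvg_cst.
- by rewrite derive1_addr; exact: is_cvg_cst.
- split; first by move=> x _.
  apply: cvg_at_right_filter; exact: continuous_addr.
- exact: (@cvg_addrr R c).
- exact: continuous_subspaceT.
- by move=> x _.
Qed.

Lemma integral_translate_itvNy (b c : R) :
  (\int[mu]_(x in `]-oo, b]) (G (x + c))%:E =
   \int[mu]_(x in `]-oo, (b + c)%R]) (G x)%:E)%E.
Proof.
transitivity (\int[mu]_(x in `]-oo, b])
    (((G \o (fun x => x + c)) * (fun x => x + c)^`()%classic) x)%:E)%E.
  by apply: eq_integral => x _; rewrite derive1_addr /= mulr1.
apply/esym; apply: (@increasing_ge0_integration_by_substitutionNy R (fun x => x + c) G b).
- by move=> x y _ _ xy; rewrite ltrD2r.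
- by rewrite derive1_addr => x _; exact: cst_continuous.
- by rewrite derive1_addr; exact: is_cvg_cst.
- by rewrite derive1_addr; exact: cvg_cst.
- split; first by move=> x _.
  apply: cvg_at_left_filter; exact: continuous_addr.
- exact: (@cvg_addrr_Ny R c).
- exact: continuous_subspaceT.
- by move=> x _.
Qed.

End translation.

Section planar_change_of_variables.
Context {R : realType}.
Notation mu := (@lebesgue_measure R).
Variables k g : R -> R.
Hypotheses (ck : continuous k) (cg : continuous g).
Hypotheses (k0 : forall x, 0 <= k x) (g0 : forall x, 0 <= g x).

Definition prod_lin (a b c d : R) (y : R * R) : \bar R :=
  (k (a * y.1 + b * y.2) * g (c * y.1 + d * y.2))%:E.

Let measurable_lin (a b : R) :
  measurable_fun [set: R * R] (fun y : R * R => a * y.1 + b * y.2).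
Proof.
by apply: measurable_funD; apply: measurable_funM;
  [exact: measurable_cst|exact: measurable_fst|exact: measurable_cst|exact: measurable_snd].
Qed.

Lemma measurable_prod_lin (a b c d : R) : measurable_fun [set: R * R] (prod_lin a b c d).
Proof.
apply/measurable_EFinP; apply: measurable_funM; apply: measurableT_comp;
  by [exact: continuous_measurable_fun|exact: measurable_lin].
Qed.

Lemma prod_lin_ge0 (a b c d : R) (y : R * R) : (0 <= prod_lin a b c d y)%E.
Proof. by rewrite lee_fin mulr_ge0. Qed.

Let continuous_prod_affine (a s c t : R) :
  continuous (fun x => k (a * x + s) * g (c * x + t)).
Proof.
have affine (h : R -> R) (a' s' : R) : continuous h -> continuous (fun x => h (a' * x + s')).
  move=> ch x; apply: continuous_comp; last exact: ch.
  by apply: cvgD; [apply: cvgM; [exact: cvg_cst|exact: cvg_id]|exact: cvg_cst].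
by move=> x; apply: cvgM; exact: affine.
Qed.

Lemma integral_prod_lin_shear1 (a b c d e : R) :
  (\int[leb2]_y prod_lin a (a * e + b) c (c * e + d) y =
   \int[leb2]_y prod_lin a b c d y)%E.
Proof.
rewrite /leb2 !fubini_tonelli2; try exact: measurable_prod_lin; try exact: prod_lin_ge0.
apply: eq_integral => y _; rewrite /fubini_G.
pose F x := k (a * x + b * y) * g (c * x + d * y).
transitivity (\int[mu]_x (F (x + e * y))%:E)%E.
  by apply: eq_integral => x _; rewrite /prod_lin /F /=; congr (k _ * g _)%:E; ring.
rewrite integral_translate //; first exact: continuous_prod_affine.
by move=> x; rewrite mulr_ge0.
Qed.

Lemma integral_prod_lin_shear2 (a b c d e : R) :
  (\int[leb2]_y prod_lin (a + b * e) b (c + d * e) d y =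
   \int[leb2]_y prod_lin a b c d y)%E.
Proof.
rewrite /leb2 !fubini_tonelli1; try exact: measurable_prod_lin; try exact: prod_lin_ge0.
apply: eq_integral => x _; rewrite /fubini_F.
pose F y := k (b * y + a * x) * g (d * y + c * x).
transitivity (\int[mu]_y (F (y + e * x))%:E)%E.
  by apply: eq_integral => y _; rewrite /prod_lin /F /=; congr (k _ * g _)%:E; ring.
rewrite integral_translate; last 2 first.
- exact: continuous_prod_affine.
- by move=> y; rewrite mulr_ge0.
by apply: eq_integral => y _; rewrite /prod_lin /F /= (addrC (b * y)) (addrC (d * y)).
Qed.

(* A rotation by an angle theta <> pi is the product of the shears with parameters
   tan (theta / 2) = u2 / (1 + u1), - sin theta and tan (theta / 2). *)
Lemma integral_prod_lin_rotate (a b c d u1 u2 : R) :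
  u1 ^+ 2 + u2 ^+ 2 = 1 -> 1 + u1 != 0 ->
  (\int[leb2]_y prod_lin (a * u1 - b * u2) (a * u2 + b * u1)
                      (c * u1 - d * u2) (c * u2 + d * u1) y =
   \int[leb2]_y prod_lin a b c d y)%E.
Proof.
move=> hu hu1.
have circle0 : 1 - u1 ^+ 2 - u2 ^+ 2 = 0 by rewrite -hu; ring.
pose al := u2 / (1 + u1); pose be := - u2.
have E1 p q : p * u1 - q * u2 = p + (p * al + q) * be.
  transitivity (p + (p * al + q) * be + (1 - u1 ^+ 2 - u2 ^+ 2) * (- p / (1 + u1))).
    by rewrite /al /be; field.
  by rewrite circle0 mul0r addr0.
have E2 p q : p * u2 + q * u1 = (p + (p * al + q) * be) * al + (p * al + q).
  transitivity ((p + (p * al + q) * be) * al + (p * al + q)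
     + (1 - u1 ^+ 2 - u2 ^+ 2) * (- (p * u2 / (1 + u1) ^+ 2 + q / (1 + u1)))).
    by rewrite /al /be; field.
  by rewrite circle0 mul0r addr0.
by rewrite E1 E2 E1 E2 integral_prod_lin_shear1 integral_prod_lin_shear2
  integral_prod_lin_shear1.
Qed.

Lemma integral_prod_lin_orthogonal (u1 u2 : R) : u1 ^+ 2 + u2 ^+ 2 = 1 ->
  (\int[leb2]_y prod_lin u1 u2 (- u2) u1 y = \int[leb2]_y prod_lin 1 0 0 1 y)%E.
Proof.
move=> hu; have [u1N1|u1N1] := eqVneq (1 + u1) 0; last first.
  rewrite -(integral_prod_lin_rotate 1 0 0 1 _ _ hu u1N1).
  by apply: eq_integral => y _; rewrite /prod_lin; congr (k _ * g _)%:E; ring.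
(* The remaining case u = (-1, 0) is the rotation by pi, a product of two quarter turns. *)
have u1E : u1 = -1 by apply/eqP; rewrite -subr_eq0 opprK addrC u1N1.
have u2E : u2 = 0.
  apply/eqP; rewrite -sqrf_eq0; apply/eqP; move: hu; rewrite u1E sqrrN expr1n.
  by move=> h; rewrite -(addKr 1 (u2 ^+ 2)) h addNr.
rewrite u1E u2E.
have quarter_turn : (0 : R) ^+ 2 + 1 ^+ 2 = 1 by rewrite expr0n expr1n add0r.
have quarter_turn_ok : (1 : R) + 0 != 0 by rewrite addr0 oner_neq0.
transitivity (\int[leb2]_y prod_lin 0 1 (-1) 0 y)%E.
  rewrite -(integral_prod_lin_rotate 0 1 (-1) 0 _ _ quarter_turn quarter_turn_ok).
  by apply: eq_integral => y _; rewrite /prod_lin; congr (k _ * g _)%:E; ring.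
rewrite -(integral_prod_lin_rotate 1 0 0 1 _ _ quarter_turn quarter_turn_ok).
by apply: eq_integral => y _; rewrite /prod_lin; congr (k _ * g _)%:E; ring.
Qed.

Lemma integral_prod_lin_id :
  (\int[leb2]_y prod_lin 1 0 0 1 y = (\int[mu]_x (k x)%:E) * (\int[mu]_x (g x)%:E))%E.
Proof.
have mEFin (h : R -> R) : continuous h -> measurable_fun [set: R] (fun x => (h x)%:E).
  by move=> ch; apply/measurable_EFinP; exact: continuous_measurable_fun.
rewrite /leb2 fubini_tonelli1 /fubini_F; try exact: measurable_prod_lin; try exact: prod_lin_ge0.
transitivity (\int[mu]_x ((k x)%:E * \int[mu]_y (g y)%:E))%E.
  apply: eq_integral => x _; rewrite -ge0_integralZl //=.
  - by apply: eq_integral => y _; rewrite /prod_lin /= !mul1r !mul0r addr0 add0r.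
  - exact: mEFin.
  - by move=> y _; rewrite lee_fin.
  - by rewrite lee_fin.
rewrite ge0_integralZr //=.
- exact: mEFin.
- by move=> y _; rewrite lee_fin.
- by apply: integral_ge0 => y _; rewrite lee_fin.
Qed.

End planar_change_of_variables.

Section laplace_weight.
Context {R : realType}.
Notation mu := (@lebesgue_measure R).

Lemma continuous_laplace_weight (a p s : R) :
  continuous (fun t : R => expR (- (a * `|p + s * t|))).
Proof.
move=> t; apply: continuous_comp; last exact: continuous_expR.
apply: cvgN; apply: cvgM; first exact: cvg_cst.
apply: (@continuous_comp _ _ _ (fun t => p + s * t) (@Num.norm R R) t).
  by apply: cvgD; [exact: cvg_cst|apply: cvgM; [exact: cvg_cst|exact: cvg_id]].
exact: norm_continuous.
Qed.

Lemma integral_le_itvy_itvNy (f : R -> R) (b : R) :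
  measurable_fun [set: R] f -> (forall x, 0 <= f x) ->
  (\int[mu]_x (f x)%:E <=
   \int[mu]_(x in `[b, +oo[) (f x)%:E + \int[mu]_(x in `]-oo, b]) (f x)%:E)%E.
Proof.
move=> mf f0; have mEf : measurable_fun [set: R] (fun x => (f x)%:E).
  exact/measurable_EFinP.
rewrite -(itv_setU_setT true b) ge0_integral_setU //=; last 2 first.
- by move=> x _; rewrite lee_fin.
- rewrite disj_set2E; apply/eqP; rewrite -subset0 => x []/= /[!in_itv]/= xb /andP[bx _].
  by move: (lt_le_trans xb bx); rewrite ltxx.
rewrite addeC; apply: leeD => //; apply: ge0_subset_integral => //=.
- exact: measurable_funS mEf.
- by move=> x _; rewrite lee_fin.
- by move=> x /=; rewrite !in_itv/= => /ltW.
by rewrite (itv_setU_setT true b).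
Qed.

Variables a s : R.
Hypothesis s0 : 0 <= s.

Lemma integral_laplace_weight_gamma1_itvy :
  (\int[mu]_(x in `[(- (a * s))%R, +oo[)
     (expR (- (a * `|a * s ^+ 2 + s * x|)) * gamma1 x)%:E =
   (expR (- ((a * s) ^+ 2 / 2)))%:E * \int[mu]_(x in `[0%R, +oo[) (gamma1 x)%:E)%E.
Proof.
transitivity (\int[mu]_(x in `[(- (a * s))%R, +oo[)
    ((expR (- ((a * s) ^+ 2 / 2)))%:E * (gamma1 (x + a * s))%:E))%E.
  apply: eq_integral => x; rewrite inE /= in_itv /= andbT => asx.
  rewrite -EFinM ger0_norm; last first.
    by rewrite (_ : _ + _ = s * (x + a * s)); [rewrite mulr_ge0 // -lerBlDr sub0r|ring].
  rewrite (_ : - _ = - (a * s) ^+ 2 + - (a * s) * x); last by ring.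
  rewrite expRD -mulrA expR_mul_gamma1 mulrA -expRD opprK.
  by congr (expR _ * _)%:E; field.
rewrite ge0_integralZl //=; last 2 first.
- apply/measurable_EFinP/(measurable_funS measurableT) => //.
  by apply: measurableT_comp; [exact: measurable_gamma1|exact: measurable_funD].
- by move=> x _; rewrite lee_fin gamma1_ge0.
by rewrite integral_translate_itvy ?addNr //; [exact: continuous_gamma1|exact: gamma1_ge0].
Qed.

Lemma integral_laplace_weight_gamma1_itvNy :
  (\int[mu]_(x in `]-oo, (- (a * s))%R])
     (expR (- (a * `|a * s ^+ 2 + s * x|)) * gamma1 x)%:E =
   (expR (3 / 2 * (a * s) ^+ 2))%:E
     * \int[mu]_(x in `]-oo, (- (2 * (a * s)))%R]) (gamma1 x)%:E)%E.
Proof.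
transitivity (\int[mu]_(x in `]-oo, (- (a * s))%R])
    ((expR (3 / 2 * (a * s) ^+ 2))%:E * (gamma1 (x + - (a * s)))%:E))%E.
  apply: eq_integral => x; rewrite inE /= in_itv /= => xas.
  rewrite -EFinM ler0_norm; last first.
    by rewrite (_ : _ + _ = s * (x + a * s)); [rewrite mulr_ge0_le0 // -lerBrDr sub0r|ring].
  rewrite (_ : - _ = (a * s) ^+ 2 + (a * s) * x); last by ring.
  rewrite expRD -mulrA expR_mul_gamma1 mulrA -expRD.
  by congr (expR _ * _)%:E; field.
rewrite ge0_integralZl //=; last 2 first.
- apply/measurable_EFinP/(measurable_funS measurableT) => //.
  by apply: measurableT_comp; [exact: measurable_gamma1|exact: measurable_funD].
- by move=> x _; rewrite lee_fin gamma1_ge0.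
rewrite integral_translate_itvNy; [|exact: continuous_gamma1|exact: gamma1_ge0].
by congr (_ * integral _ _ _)%E; rewrite -opprD -mulr2n mulr_natl.
Qed.

Lemma integral_laplace_weight_gamma1_le :
  (\int[mu]_x (expR (- (a * `|a * s ^+ 2 + s * x|)) * gamma1 x)%:E <=
   (expR (- ((a * s) ^+ 2 / 2)))%:E * \int[mu]_(x in `[0%R, +oo[) (gamma1 x)%:E
   + (expR (3 / 2 * (a * s) ^+ 2))%:E
     * \int[mu]_(x in `]-oo, (- (2 * (a * s)))%R]) (gamma1 x)%:E)%E.
Proof.
rewrite -integral_laplace_weight_gamma1_itvy -integral_laplace_weight_gamma1_itvNy.
apply: integral_le_itvy_itvNy => [|x]; last by rewrite mulr_ge0 ?expR_ge0 ?gamma1_ge0.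
apply: measurable_funM; last exact: measurable_gamma1.
apply: continuous_measurable_fun; exact: continuous_laplace_weight.
Qed.

End laplace_weight.

Section noise_operator.
Context {R : realType}.
Notation mu := (@lebesgue_measure R).

Lemma lin_unit_le_norm2 (u z : R * R) : u.1 ^+ 2 + u.2 ^+ 2 = 1 ->
  `|u.1 * z.1 + u.2 * z.2| <= norm2 z.
Proof.
move=> hu; rewrite -sqrtr_sqr ler_sqrt; last by rewrite addr_ge0 ?sqr_ge0.
rewrite -subr_ge0 -[X in X - _]mul1r -hu.
have -> : (u.1 ^+ 2 + u.2 ^+ 2) * (z.1 ^+ 2 + z.2 ^+ 2) - (u.1 * z.1 + u.2 * z.2) ^+ 2
   = (u.1 * z.2 - u.2 * z.1) ^+ 2 by ring.
exact: sqr_ge0.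
Qed.

Lemma measurable_norm2 : measurable_fun [set: R * R] (@norm2 R).
Proof.
apply: measurableT_comp; first by apply: continuous_measurable_fun; exact: sqrt_continuous.
by apply: measurable_funD; apply: measurable_funX; [exact: measurable_fst|exact: measurable_snd].
Qed.

Lemma measurable_Trho_integrand (rho : R) (u : R * R -> R) (x : R * R) :
  measurable_fun [set: R * R] u ->
  measurable_fun [set: R * R] (fun y : R * R =>
    (u (rho * x.1 + y.1 * Num.sqrt (1 - rho ^+ 2),
        rho * x.2 + y.2 * Num.sqrt (1 - rho ^+ 2)) * gamma2 y)%:E).
Proof.
move=> mU; apply/measurable_EFinP; apply: measurable_funM.
  apply: measurableT_comp => //; apply: measurable_fun_pair.
  - by apply: measurable_funD => //; apply: measurable_funM => //; exact: measurable_fst.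
  - by apply: measurable_funD => //; apply: measurable_funM => //; exact: measurable_snd.
rewrite (_ : gamma2 = fun y => gamma1 y.1 * gamma1 y.2); last first.
  by apply/funext => y; exact: gamma2_factor.
by apply: measurable_funM; apply: measurableT_comp;
  [exact: measurable_gamma1|exact: measurable_fst|exact: measurable_gamma1|exact: measurable_snd].
Qed.

Lemma Trho_ge_integral_laplace_weight (rho a r : R) (x : R * R) :
  0 <= a -> 0 < r -> norm2 x = r ->
  (\int[mu]_t ((1 - expR (- (a * `|rho * r + Num.sqrt (1 - rho ^+ 2) * t|)))
                  * gamma1 t)%:E
   <= Trho rho (fun z => 1 - expR (- (a * norm2 z)))%R x)%E.
Proof.
move=> a0 r0 xr; set s := Num.sqrt (1 - rho ^+ 2).
have x2 : x.1 ^+ 2 + x.2 ^+ 2 = r ^+ 2.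
  by rewrite -xr sqr_sqrtr // addr_ge0 ?sqr_ge0.
pose u := (x.1 / r, x.2 / r).
have u_unit : u.1 ^+ 2 + u.2 ^+ 2 = 1.
  by rewrite /= !expr_div_n -mulrDl x2 divff // expf_neq0 // gt_eqF.
pose k t := (1 - expR (- (a * `|rho * r + s * t|))) * gamma1 t.
have ck : continuous k.
  move=> t; apply: cvgM; last exact: continuous_gamma1.
  by apply: cvgB; [exact: cvg_cst|exact: continuous_laplace_weight].
have k0 t : 0 <= k t.
  by rewrite mulr_ge0 ?gamma1_ge0 // subr_ge0 -expR0 ler_expR oppr_le0 mulr_ge0.
have cg1 := @continuous_gamma1 R; have g10 := @gamma1_ge0 R.
rewrite -[X in (X <= _)%E]mule1 -integral_gamma1 -integral_prod_lin_id //.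
rewrite -(@integral_prod_lin_orthogonal _ k gamma1 ck cg1 k0 g10 _ _ u_unit).
apply: ge0_le_integral => //.
- by move=> y _; exact: prod_lin_ge0.
- exact: measurable_prod_lin.
- apply: (measurable_Trho_integrand rho (fun z => 1 - expR (- (a * norm2 z)))).
  apply: measurable_funB => //.
  apply: measurableT_comp; first exact: measurable_expR.
  by apply: measurable_funN; apply: measurable_funM => //; exact: measurable_norm2.
move=> y _; rewrite /prod_lin lee_fin (@gamma2_factor _ y (u.1 * y.1 + u.2 * y.2)
  (- u.2 * y.1 + u.1 * y.2)); last first.
  by rewrite -[RHS]mul1r -u_unit; ring.
rewrite /k -mulrA; apply: ler_wpM2r; first by rewrite mulr_ge0.
rewrite lerD2l lerN2 ler_expR lerN2; apply: ler_wpM2l => //.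
set z := (_, _); have -> : rho * r + s * (u.1 * y.1 + u.2 * y.2) = u.1 * z.1 + u.2 * z.2.
  have -> : rho * r = rho * (x.1 ^+ 2 + x.2 ^+ 2) / r.
    by rewrite x2 expr2 mulrA mulfK // gt_eqF.
  by rewrite /z /u /s /=; field; rewrite gt_eqF.
exact: lin_unit_le_norm2.
Qed.

End noise_operator.

Theorem lemma7p1 (R : realType) (rho r : R) :
  0 < rho -> rho < 1 -> 0 < r ->
  let a := rho * r / (1 - rho ^+ 2) in
  let phi := fun x : R * R => 1 - expR (- (a * norm2 x)) in
  forall x : R * R, norm2 x = r ->
  ((1%:E
    - (expR (- (rho ^+ 2 * r ^+ 2 / (2 * (1 - rho ^+ 2)))))%:E
        * (\int[@lebesgue_measure R]_(t in `[0%R, +oo[) (gamma1 t)%:E)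
    - (expR (3 / 2 * (rho ^+ 2 * r ^+ 2 / (1 - rho ^+ 2))))%:E
        * (\int[@lebesgue_measure R]_(t in `]-oo, (- (2 * rho * r / Num.sqrt (1 - rho ^+ 2)))%R])
             (gamma1 t)%:E))
   <= Trho rho phi x)%E.
Proof.
move=> rho0 rho1 r0 a phi x xr; set s := Num.sqrt (1 - rho ^+ 2).
have rho2_lt1 : 0 < 1 - rho ^+ 2 by rewrite subr_gt0 expr_lt1 ?ltW.
have s0 : 0 < s by rewrite sqrtr_gt0.
have s2 : s ^+ 2 = 1 - rho ^+ 2 by rewrite sqr_sqrtr ?ltW.
have a0 : 0 <= a by rewrite divr_ge0 ?mulr_ge0 ?ltW.
have rhorE : rho * r = a * s ^+ 2 by rewrite s2 /a mulfVK ?gt_eqF.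
have asE : a * s = rho * r / s by rewrite rhorE -mulrA expr2 mulfK ?gt_eqF.
have as2E : (a * s) ^+ 2 = rho ^+ 2 * r ^+ 2 / (1 - rho ^+ 2).
  by rewrite asE expr_div_n exprMn s2.
have halfE : (a * s) ^+ 2 / 2 = rho ^+ 2 * r ^+ 2 / (2 * (1 - rho ^+ 2)).
  by rewrite as2E; field; rewrite gt_eqF.
have twoE : 2 * (a * s) = 2 * rho * r / s by rewrite asE !mulrA.
have g01 t : 0 <= expR (- (a * `|a * s ^+ 2 + s * t|)) <= 1.
  by rewrite expR_ge0 -expR0 ler_expR oppr_le0 mulr_ge0.
have := Trho_ge_integral_laplace_weight rho _ _ _ a0 r0 xr; rewrite -/s rhorE.
rewrite integral_one_sub_mul_gamma1 //; last first.
  by apply: continuous_measurable_fun; exact: continuous_laplace_weight.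
apply: le_trans; rewrite -addeA -fin_num_oppeD; last first.
  by rewrite fin_numM // fin_num_integral_gamma1.
apply: leeB => //; have := integral_laplace_weight_gamma1_le a s (ltW s0).
by rewrite halfE twoE as2E.
Qed.
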